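(* Let $V$ be a finite nonempty set of voters, $A$ a finite set of alternatives, and $F:\mathcal{P}(V,A)\to S_2(A)$ a consular election rule satisfying SPP and SPO. Then for every linear order $L$ on $A$ (in particular for every voter's preference order) there is a unique favourite committee of $L$ in the range of $F$.
   Context: A profile assigns to each voter $i\in V$ a linear order $P_i$ on $A$; $P_i'P_{-i}$ replaces voter $i$'s order by $P_i'$. $S_2(A)$ is the set of 2-element subsets of $A$; a consular election rule is a map $F:\mathcal{P}(V,A)\to S_2(A)$. SPO: for all $P$, $i$, $P_i'$, $\mathrm{best}(P_i,F(P))\succeq_i\mathrm{best}(P_i,F(P_i'P_{-i}))$; SPP: same with $\mathrm{worst}$, where $\mathrm{best}(P_i,W)$, $\mathrm{worst}(P_i,W)$ are the $P_i$-best and $P_i$-worst elements of $W$. For a linear order $L$ on $A$ and $X,Y\in S_2(A)$: $X\succeq^O Y$ iff the $L$-best element of $X$ is weakly $L$-above that of $Y$; $X\succeq^P Y$ iff the $L$-worst element of $X$ is weakly $L$-above that of $Y$. A favourite committee of $L$ in $\mathcal{X}\subseteq S_2(A)$ is an element of $\mathcal{X}$ maximal in $\mathcal{X}$ under both $\succeq^O$ and $\succeq^P$. *)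

From mathcomp Require Import all_boot.
Set Implicit Arguments. Unset Strict Implicit. Unset Printing Implicit Defensive.

(* A linear order on A: [L x y] means "x is weakly L-above y". *)
Record lorder (A : finType) := LOrder {
  lrel :> rel A;
  lorder_refl : reflexive lrel;
  lorder_anti : antisymmetric lrel;
  lorder_trans : transitive lrel;
  lorder_total : total lrel }.

Definition upd (V : finType) (A : finType) (P : V -> lorder A) (i : V)
  (P' : lorder A) : V -> lorder A := fun j => if j == i then P' else P j.

Definition is_best (A : finType) (L : lorder A) (W : {set A}) (x : A) : Prop :=
  x \in W /\ forall y, y \in W -> L x y.
Definition is_worst (A : finType) (L : lorder A) (W : {set A}) (x : A) : Prop :=
  x \in W /\ forall y, y \in W -> L y x.

Definition consular (V A : finType) (F : (V -> lorder A) -> {set A}) : Prop :=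
  forall P, #|F P| = 2.

Definition SPO (V A : finType) (F : (V -> lorder A) -> {set A}) : Prop :=
  forall (P : V -> lorder A) (i : V) (P' : lorder A) (b b' : A),
    is_best (P i) (F P) b -> is_best (P i) (F (upd P i P')) b' -> P i b b'.

Definition SPP (V A : finType) (F : (V -> lorder A) -> {set A}) : Prop :=
  forall (P : V -> lorder A) (i : V) (P' : lorder A) (w w' : A),
    is_worst (P i) (F P) w -> is_worst (P i) (F (upd P i P')) w' -> P i w w'.

Definition geO (A : finType) (L : lorder A) (X Y : {set A}) : Prop :=
  forall x y, is_best L X x -> is_best L Y y -> L x y.
Definition geP (A : finType) (L : lorder A) (X Y : {set A}) : Prop :=
  forall x y, is_worst L X x -> is_worst L Y y -> L x y.

Definition favourite (A : finType) (L : lorder A) (S : {set A} -> Prop)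
  (X : {set A}) : Prop :=
  S X /\ forall Y, S Y -> (geO L Y X -> geO L X Y) /\ (geP L Y X -> geP L X Y).

Definition in_range (V A : finType) (F : (V -> lorder A) -> {set A})
  (X : {set A}) : Prop := exists P, F P = X.

(* Replacing voters one at a time by [L] never lowers, with respect to [L],
   the best or the worst member of the committee: after the switch the
   voter is an [L]-voter whose deviation back to the old order is covered
   by SPO and SPP.  Hence the committee of the unanimous profile in which
   everybody votes [L] dominates every committee in the range under both
   orders, so it is a favourite.  Any other favourite must then have the
   same best and the same worst member, and a committee of size two is
   determined by these. *)

From Stdlib Require Import FunctionalExtensionality.
From mathcomp Require Import all_boot.

Set Implicit Arguments.
Unset Strict Implicit.
Unset Printing Implicit Defensive.

Lemma total_rel_max (T : eqType) (r : rel T) :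
  transitive r -> total r ->
  forall s : seq T, s != [::] -> exists2 x, x \in s & {in s, forall y, r x y}.
Proof.
move=> r_trans r_total; elim=> [//|a [|b s] IH] _.
  by exists a; rewrite ?mem_head // => y /[!inE] /eqP->; rewrite -[r a a]orbb.
have [x xs x_max] := IH isT.
have [rax|rxa] := orP (r_total a x).
  exists a; first exact: mem_head.
  by move=> y /[!inE] /orP[/eqP->|/x_max]; [rewrite -[r a a]orbb | exact: r_trans].
exists x; first by rewrite inE xs orbT.
by move=> y /[!inE] /orP[/eqP->|/x_max].
Qed.

Section BestWorst.

Variables (A : finType) (L : lorder A).

Definition dual_lorder : lorder A.
Proof.
refine (@LOrder A (fun x y => L y x) (lorder_refl L) _ _ _).
- by move=> x y; rewrite andbC => /lorder_anti.
- by move=> y x z xy yz; apply: lorder_trans yz xy.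
- by move=> x y; apply: lorder_total.
Defined.

Lemma best_exists (W : {set A}) : W != set0 -> exists x, is_best L W x.
Proof.
case/set0Pn=> x0 Wx0.
have [|x Wx x_max] := total_rel_max (@lorder_trans _ L) (@lorder_total _ L) (s := enum W).
  by apply/eqP=> W_nil; rewrite -mem_enum W_nil in Wx0.
by exists x; split=> [|y Wy]; [rewrite -mem_enum | apply: x_max; rewrite mem_enum].
Qed.

Lemma geO_refl (X : {set A}) : geO L X X.
Proof. by move=> x y [_ x_max] [Xy _]; apply: x_max. Qed.

Lemma geP_refl (X : {set A}) : geP L X X.
Proof. by move=> x y [Xx _] [_ y_min]; apply: y_min. Qed.

Lemma geO_trans (X Y Z : {set A}) : Y != set0 -> geO L X Y -> geO L Y Z -> geO L X Z.
Proof.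
move=> /best_exists [y best_y] XY YZ x z best_x best_z.
exact: lorder_trans (XY _ _ best_x best_y) (YZ _ _ best_y best_z).
Qed.

Lemma set_best_worst (X : {set A}) (b w : A) :
  #|X| <= 2 -> is_best L X b -> is_worst L X w -> X = [set b; w].
Proof.
move=> X_le2 [Xb b_max] [Xw w_min].
have bwX : [set b; w] \subset X by apply/subsetP=> y /set2P[]->.
have [eq_bw|b_neq_w] := eqVneq b w.
  subst w; rewrite setUid; apply/setP=> y; rewrite inE; apply/idP/eqP=> [Xy|->//].
  by apply: (@lorder_anti _ L); rewrite w_min ?b_max.
by apply/eqP; rewrite eq_sym eqEcard bwX cards2 b_neq_w (leq_trans X_le2).
Qed.

End BestWorst.

Lemma worst_exists (A : finType) (L : lorder A) (W : {set A}) :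
  W != set0 -> exists x, is_worst L W x.
Proof. exact: best_exists (dual_lorder L) W. Qed.

Lemma geP_trans (A : finType) (L : lorder A) (X Y Z : {set A}) :
  Y != set0 -> geP L X Y -> geP L Y Z -> geP L X Z.
Proof.
move=> /(worst_exists L) [y worst_y] XY YZ x z worst_x worst_z.
exact: lorder_trans (XY _ _ worst_x worst_y) (YZ _ _ worst_y worst_z).
Qed.

Lemma committee_eq (A : finType) (L : lorder A) (X Y : {set A}) :
  X != set0 -> Y != set0 -> #|X| <= 2 -> #|Y| <= 2 ->
  geO L X Y -> geO L Y X -> geP L X Y -> geP L Y X -> X = Y.
Proof.
move=> X0 Y0 X_le2 Y_le2 XYO YXO XYP YXP.
have [[bx best_x] [by_ best_y]] := (best_exists L X0, best_exists L Y0).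
have [[wx worst_x] [wy worst_y]] := (worst_exists L X0, worst_exists L Y0).
rewrite (set_best_worst X_le2 best_x worst_x) (set_best_worst Y_le2 best_y worst_y).
congr [set _; _]; apply: (@lorder_anti _ L).
  by rewrite (XYO _ _ best_x best_y) (YXO _ _ best_y best_x).
by rewrite (XYP _ _ worst_x worst_y) (YXP _ _ worst_y worst_x).
Qed.

Section Dominance.

Variables (V A : finType) (F : (V -> lorder A) -> {set A}) (L : lorder A).
Hypotheses (F_consular : consular F) (F_SPP : SPP F) (F_SPO : SPO F).

Lemma F_neq0 (P : V -> lorder A) : F P != set0.
Proof. by rewrite -card_gt0 F_consular. Qed.

Lemma upd_updK (P : V -> lorder A) (i : V) (P' : lorder A) :
  upd (upd P i P') i (P i) = P.
Proof. by apply: functional_extensionality => j; rewrite /upd; case: eqP => [->|]. Qed.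

Lemma geO_switch (P : V -> lorder A) (i : V) : geO L (F (upd P i L)) (F P).
Proof.
move=> b b' best_b best_b'.
have := F_SPO (P := upd P i L) (i := i) (P' := P i) (b := b) (b' := b').
by rewrite upd_updK /upd eqxx; apply.
Qed.

Lemma geP_switch (P : V -> lorder A) (i : V) : geP L (F (upd P i L)) (F P).
Proof.
move=> w w' worst_w worst_w'.
have := F_SPP (P := upd P i L) (i := i) (P' := P i) (w := w) (w' := w').
by rewrite upd_updK /upd eqxx; apply.
Qed.

Lemma switch_seq_dominates (s : seq V) (P : V -> lorder A) :
  let Q := fun j => if j \in s then L else P j in
  geO L (F Q) (F P) /\ geP L (F Q) (F P).
Proof.
elim: s P => [|i s IH] P /=.
  by split; [apply: geO_refl | apply: geP_refl].
have -> : (fun j => if j \in i :: s then L else P j) =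
          (fun j => if j \in s then L else upd P i L j).
  by apply: functional_extensionality => j; rewrite inE /upd; case: (j == i); case: (j \in s).
have [IHO IHP] := IH (upd P i L).
split; [exact: geO_trans (F_neq0 _) IHO (@geO_switch P i)
       | exact: geP_trans (F_neq0 _) IHP (@geP_switch P i)].
Qed.

Lemma unanimous_dominates (P : V -> lorder A) :
  geO L (F (fun _ => L)) (F P) /\ geP L (F (fun _ => L)) (F P).
Proof.
have := switch_seq_dominates (enum V) P.
have -> // : (fun j => if j \in enum V then L else P j) = (fun _ => L).
by apply: functional_extensionality => j; rewrite mem_enum.
Qed.

End Dominance.

Theorem corollary36 (V A : finType) (F : (V -> lorder A) -> {set A}) :
  0 < #|V| -> consular F -> SPP F -> SPO F ->
  forall L : lorder A, exists! X : {set A}, favourite L (in_range F) X.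
Proof.
move=> _ F_consular F_SPP F_SPO L.
have dom := unanimous_dominates L F_consular F_SPP F_SPO.
have F_le2 P : #|F P| <= 2 by rewrite F_consular.
exists (F (fun _ => L)); split.
  split=> [|_ [P <-]]; first by exists (fun _ => L).
  by have [domO domP] := dom P; split.
move=> _ [[P <-] P_max].
have [domO domP] := dom P.
have [maxO maxP] := P_max _ (ex_intro _ (fun _ => L) erefl).
apply: committee_eq (F_neq0 F_consular _) (F_neq0 F_consular _) (F_le2 _) (F_le2 _)
  domO (maxO domO) domP (maxP domP).
Qed.
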